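(* Let $\alpha\neq 0$, $\beta,\gamma$ be real numbers and $\lambda$ a nonnegative integer. For all nonnegative integers $n$, $$\mathcal{E}_{n}^{(\lambda)}(\alpha,\beta,\gamma)=(-1)^{n}A_{n}^{\lambda,-1/2}(\alpha,-\beta,-\gamma)=A_{n}^{\lambda,-1/2}(-\alpha,\beta,\gamma).$$
   Context: For a number $t$ and $\alpha$, the generalised factorial is $(t|\alpha)_n=\prod_{j=0}^{n-1}(t-j\alpha)$ for $n\ge 1$ and $(t|\alpha)_0=1$. For parameters $\alpha,\beta,\gamma$, the generalised Stirling numbers $S(n,k,\alpha,\beta,\gamma)$ ($0\le k\le n$) are defined by the polynomial identity $(t|\alpha)_n=\sum_{k=0}^{n}S(n,k,\alpha,\beta,\gamma)\,(t-\gamma|\beta)_k$ in the variable $t$. For a nonnegative integer $\lambda$ put $\binom{k+\lambda-1}{k}=\lambda(\lambda+1)\cdots(\lambda+k-1)/k!$ (equal to $1$ for $k=0$). Define $$A^{\lambda,x}_n(\alpha,\beta,\gamma)=\sum_{k=0}^{n}\binom{k+\lambda-1}{k}(-1)^{n+k}\beta^k k!\,S(n,k,\alpha,-\beta,-\gamma)\,x^k .$$ The higher order generalised Euler polynomials $\mathcal{E}_n^{(\lambda)}(\alpha,\beta,x)$ are defined by the formal power series identity $$\left[\frac{2}{(1+\alpha t)^{\beta/\alpha}+1}\right]^{\lambda}(1+\alpha t)^{x/\alpha}=\sum_{n=0}^{\infty}\mathcal{E}_{n}^{(\lambda)}(\alpha,\beta,x)\frac{t^{n}}{n!},$$ where $(1+\alpha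 t)^{c}=\sum_{j\ge0}\binom{c}{j}\alpha^jt^j$. *)

From HB Require Import structures.
From mathcomp Require Import all_boot all_order all_algebra.
From Stdlib Require Import ClassicalEpsilon.
Set Implicit Arguments. Unset Strict Implicit. Unset Printing Implicit Defensive.
Import Order.TTheory GRing.Theory Num.Theory.
Local Open Scope ring_scope.

Section Defs.
Variable R : realFieldType.

Definition gfact (a alpha : R) (n : nat) : {poly R} :=
  \prod_(j < n) ('X - (a + j%:R * alpha)%:P).

Definition gstirling_spec (alpha beta gamma : R) (S : nat -> nat -> R) : Prop :=
  forall n : nat, gfact 0 alpha n = \sum_(k < n.+1) S n k *: gfact gamma beta k.

Definition gstirling (alpha beta gamma : R) : nat -> nat -> R :=
  epsilon (inhabits (fun _ _ => 0)) (gstirling_spec alpha beta gamma).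

(* binom(k+lambda-1, k) = lambda (lambda+1) ... (lambda+k-1) / k! *)
Definition mbinom (lambda k : nat) : R :=
  (\prod_(i < k) (lambda + i)%:R) / k`!%:R.

Definition Apoly (lambda : nat) (x : R) (n : nat) (alpha beta gamma : R) : R :=
  \sum_(k < n.+1) mbinom lambda k * (-1) ^+ (n + k) * beta ^+ k * k`!%:R
                  * gstirling alpha (- beta) (- gamma) n k * x ^+ k.

Definition fps := nat -> R.
Definition fps_one : fps := fun n => (n == 0%N)%:R.
Definition fps_const (c : R) : fps := fun n => if n == 0%N then c else 0.
Definition fps_add (f g : fps) : fps := fun n => f n + g n.
Definition fps_mul (f g : fps) : fps :=
  fun n => \sum_(i < n.+1) f i * g (n - i)%N.
Definition fps_pow (f : fps) (k : nat) : fps := iter k (fps_mul f) fps_one.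

Fixpoint fps_inv_seq (f : fps) (n : nat) : seq R :=
  match n with
  | 0 => [:: (f 0%N)^-1]
  | m.+1 => let s := fps_inv_seq f m in
            rcons s (- (f 0%N)^-1 * \sum_(i < m.+1) f i.+1 * nth 0 s (m - i)%N)
  end.
Definition fps_inv (f : fps) : fps := fun n => nth 0 (fps_inv_seq f n) n.

Definition gbinom (c : R) (j : nat) : R := (\prod_(i < j) (c - i%:R)) / j`!%:R.

(* (1 + alpha t)^c = sum_j binom(c,j) alpha^j t^j *)
Definition fps_binpow (alpha c : R) : fps := fun j => gbinom c j * alpha ^+ j.

(* Higher order generalised Euler polynomials:
   [2/((1+alpha t)^{beta/alpha}+1)]^lambda (1+alpha t)^{x/alpha}
     = sum_n E_n^{(lambda)}(alpha,beta,x) t^n/n!. *)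
Definition genEuler (lambda : nat) (n : nat) (alpha beta x : R) : R :=
  n`!%:R *
  fps_mul
    (fps_pow (fps_mul (fps_const 2)
               (fps_inv (fps_add (fps_binpow alpha (beta / alpha)) fps_one)))
             lambda)
    (fps_binpow alpha (x / alpha)) n.

End Defs.

(* Write B_c = (1 + alpha t)^(c/alpha); it solves (1 + alpha t) y' = c y.  Hence the
   series F_k = (B_beta - 1)^k B_gamma satisfy
     (1 + alpha t) F_k' = (k beta + gamma) F_k + k beta F_(k-1),
   which on coefficients is the recurrence S(n+1,k) = S(n,k-1) + (k beta + gamma - n alpha) S(n,k)
   of the generalised Stirling numbers, scaled by beta^k k!: so n! [t^n] F_k = beta^k k! S(n,k).
   With w = -(B_beta - 1)/2, which has no constant term, the kernel 2/(B_beta + 1) is 1/(1 - w),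
   and 1/(1 - w)^lambda = sum_k binom(k+lambda-1,k) w^k modulo t^(n+1).  This gives
     E_n = sum_k binom(k+lambda-1,k) beta^k k! S(n,k,alpha,beta,gamma) (-1/2)^k,
   and both stated forms follow from the symmetry
     S(n,k,-alpha,-beta,-gamma) = (-1)^(n+k) S(n,k,alpha,beta,gamma). *)

From HB Require Import structures.
From mathcomp Require Import all_boot all_order all_algebra.
From mathcomp Require Import boolp.
From Stdlib Require Import ClassicalEpsilon.
From mathcomp Require Import ring zify.
Set Implicit Arguments. Unset Strict Implicit. Unset Printing Implicit Defensive.
Import Order.TTheory GRing.Theory Num.Theory.
Local Open Scope ring_scope.

Section PowerSeriesRing.
Variable R : realFieldType.
Implicit Types (f g h : fps R) (c : R).

HB.instance Definition _ := gen_eqMixin (fps R).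
HB.instance Definition _ := gen_choiceMixin (fps R).

Lemma fpsP f g : (forall n, f n = g n) -> f = g.
Proof. exact: functional_extensionality_dep. Qed.

Let fps_zero : fps R := fun _ => 0.
Let fps_opp f : fps R := fun n => - f n.

Let fps_addA : associative (@fps_add R).
Proof. by move=> f g h; apply: fpsP => n; rewrite /fps_add addrA. Qed.
Let fps_addC : commutative (@fps_add R).
Proof. by move=> f g; apply: fpsP => n; rewrite /fps_add addrC. Qed.
Let fps_add0 : left_id fps_zero (@fps_add R).
Proof. by move=> f; apply: fpsP => n; rewrite /fps_add add0r. Qed.
Let fps_addN : left_inverse fps_zero fps_opp (@fps_add R).
Proof. by move=> f; apply: fpsP => n; rewrite /fps_add addNr. Qed.

HB.instance Definition _ := GRing.isZmodule.Build (fps R) fps_addA fps_addC fps_add0 fps_addN.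

Definition fps_trunc n f : {poly R} := \poly_(i < n.+1) f i.

Lemma coef_fps_trunc n f i : (i <= n)%N -> (fps_trunc n f)`_i = f i.
Proof. by move=> le_in; rewrite coef_poly ltnS le_in. Qed.

(* Products of series agree with products of polynomial truncations: this transports the
   ring laws from [{poly R}]. *)
Lemma fps_mul_polyE n f g (p q : {poly R}) :
  {in [pred i | i <= n]%N, forall i, p`_i = f i} ->
  {in [pred i | i <= n]%N, forall i, q`_i = g i} ->
  fps_mul f g n = (p * q)`_n.
Proof.
move=> pf qg; rewrite coefM /fps_mul; apply: eq_bigr => i _.
by rewrite pf ?qg // inE ?leq_subr // -ltnS.
Qed.

Lemma fps_mul_truncE n f g i :
  (i <= n)%N -> fps_mul f g i = (fps_trunc n f * fps_trunc n g)`_i.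
Proof.
by move=> le_in; apply: fps_mul_polyE => j le_ji; apply: coef_fps_trunc;
  exact: leq_trans le_ji le_in.
Qed.

Let fps_mulA : associative (@fps_mul R).
Proof.
move=> f g h; apply: fpsP => n.
rewrite (@fps_mul_polyE n _ _ (fps_trunc n f) (fps_trunc n g * fps_trunc n h)).
- rewrite mulrA; symmetry; apply: fps_mul_polyE => i le_in.
    by rewrite -fps_mul_truncE.
  by rewrite coef_fps_trunc.
- by move=> i le_in; rewrite coef_fps_trunc.
- by move=> i le_in; rewrite -fps_mul_truncE.
Qed.
Let fps_mulC : commutative (@fps_mul R).
Proof. by move=> f g; apply: fpsP => n; rewrite !(fps_mul_truncE _ _ (leqnn n)) mulrC. Qed.
Let fps_mul1 : left_id (fps_one R) (@fps_mul R).
Proof.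
move=> f; apply: fpsP => n; rewrite (@fps_mul_polyE n _ _ 1 (fps_trunc n f)).
- by rewrite mul1r coef_fps_trunc.
- by move=> i _; rewrite coef1.
- by move=> i le_in; rewrite coef_fps_trunc.
Qed.
Let fps_mulDl : left_distributive (@fps_mul R) (@fps_add R).
Proof.
move=> f g h; apply: fpsP => n; rewrite /fps_add !(fps_mul_truncE _ _ (leqnn n)).
have -> : fps_trunc n (fps_add f g) = fps_trunc n f + fps_trunc n g.
  by apply/polyP => i; rewrite coefD !coef_poly; case: ifP; rewrite ?addr0.
by rewrite mulrDl coefD.
Qed.
Let fps_one_neq0 : fps_one R != fps_zero.
Proof. by apply/eqP => /(congr1 (fun f => f 0%N)) /eqP; rewrite oner_eq0. Qed.

HB.instance Definition _ :=
  GRing.Zmodule_isComNzRing.Build (fps R) fps_mulA fps_mulC fps_mul1 fps_mulDl fps_one_neq0.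

Lemma coef_fpsD f g n : (f + g) n = f n + g n. Proof. by []. Qed.
Lemma coef_fpsB f g n : (f - g) n = f n - g n. Proof. by []. Qed.
Lemma coef_fps1 n : (1 : fps R) n = (n == 0%N)%:R. Proof. by []. Qed.
Lemma coef_fpsM f g n : (f * g) n = \sum_(i < n.+1) f i * g (n - i)%N. Proof. by []. Qed.
Lemma fps_powE f k : fps_pow f k = f ^+ k.
Proof. by elim: k => //= k ->; rewrite exprS. Qed.

Lemma coef_fpsM0 f g : (f * g) 0%N = f 0%N * g 0%N.
Proof. by rewrite coef_fpsM big_ord1. Qed.
Lemma coef_fpsX0 f k : (f ^+ k) 0%N = f 0%N ^+ k.
Proof. by elim: k => [|k IH]; rewrite ?exprS ?coef_fpsM0 ?IH. Qed.

Lemma coef_fps_constM c f n : (fps_const c * f) n = c * f n.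
Proof.
rewrite coef_fpsM big_ord_recl big1 ?addr0 ?subn0 // => i _.
by rewrite /fps_const /= mul0r.
Qed.

Let fps_const_is_zmod_morphism : zmod_morphism (@fps_const R).
Proof.
by move=> a b; apply: fpsP => n; rewrite coef_fpsB /fps_const; case: ifP; rewrite ?subr0.
Qed.
Let fps_const_is_monoid_morphism : monoid_morphism (@fps_const R).
Proof.
split=> [|a b]; apply: fpsP => n; first by rewrite coef_fps1 /fps_const; case: ifP.
by rewrite coef_fps_constM /fps_const; case: ifP; rewrite ?mulr0.
Qed.
HB.instance Definition _ := GRing.isZmodMorphism.Build R (fps R) (@fps_const R)
  fps_const_is_zmod_morphism.
HB.instance Definition _ := GRing.isMonoidMorphism.Build R (fps R) (@fps_const R)
  fps_const_is_monoid_morphism.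

Definition fps_X : fps R := fun n => (n == 1%N)%:R.

Lemma coef_fps_XM f n : (fps_X * f) n = if n is m.+1 then f m else 0.
Proof.
rewrite [LHS](@fps_mul_polyE n _ _ 'X (fps_trunc n f)).
- by rewrite coefXM; case: n => [|m] //=; rewrite coef_fps_trunc.
- by move=> i _; rewrite coefX.
- by move=> i le_in; rewrite coef_fps_trunc.
Qed.

Definition fps_deriv f : fps R := fun n => n.+1%:R * f n.+1.

Lemma fps_derivB f g : fps_deriv (f - g) = fps_deriv f - fps_deriv g.
Proof. by apply: fpsP => n; rewrite /fps_deriv !coef_fpsB mulrBr. Qed.
Lemma fps_deriv1 : fps_deriv 1 = 0.
Proof. by apply: fpsP => n; rewrite /fps_deriv coef_fps1 mulr0. Qed.

Lemma fps_derivM f g : fps_deriv (f * g) = fps_deriv f * g + f * fps_deriv g.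
Proof.
apply: fpsP => n; rewrite coef_fpsD {1}/fps_deriv.
rewrite [(f * g) n.+1](fps_mul_truncE _ _ (leqnn n.+1)) mulr_natl -coef_deriv derivM coefD.
have trunc_deriv h i : (i <= n)%N -> (fps_trunc n.+1 h)^`()`_i = fps_deriv h i.
  by move=> le_in; rewrite coef_deriv coef_fps_trunc // /fps_deriv mulr_natl.
have trunc_le h i : (i <= n)%N -> (fps_trunc n.+1 h)`_i = h i.
  by move=> le_in; rewrite coef_fps_trunc // ltnW.
by congr (_ + _); symmetry; apply: fps_mul_polyE => i le_in;
  rewrite ?trunc_deriv ?trunc_le.
Qed.

Lemma fps_derivX f k : fps_deriv (f ^+ k) = k%:R * f ^+ k.-1 * fps_deriv f.
Proof.
elim: k => [|k IH]; first by rewrite fps_deriv1 !mul0r.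
case: k IH => [|k] IH; first by rewrite expr1 expr0 !mul1r.
by rewrite exprS fps_derivM IH /= exprS mulrSr; ring.
Qed.

Lemma coef_fps_X_deriv f n : (fps_X * fps_deriv f) n = n%:R * f n.
Proof. by rewrite coef_fps_XM; case: n => [|n] //; rewrite mul0r. Qed.

Lemma size_fps_inv_seq f n : size (fps_inv_seq f n) = n.+1.
Proof. by elim: n => //= n IH; rewrite size_rcons IH. Qed.

Lemma nth_fps_inv_seq f n i : (i <= n)%N -> nth 0 (fps_inv_seq f n) i = fps_inv f i.
Proof.
elim: n => [|n IH] le_in; first by case: i le_in.
rewrite leq_eqVlt in le_in; case/orP: le_in => [/eqP -> //|lt_in].
by rewrite /= nth_rcons size_fps_inv_seq lt_in IH.
Qed.

Lemma fps_mulVf f : f 0%N != 0 -> fps_inv f * f = 1.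
Proof.
move=> f0; apply: fpsP => -[|m]; first by rewrite coef_fpsM0 /fps_inv /= mulVf.
have invS : fps_inv f m.+1
    = - (f 0%N)^-1 * \sum_(i < m.+1) f i.+1 * fps_inv f (m - i)%N.
  rewrite /fps_inv /= nth_rcons size_fps_inv_seq ltnn eqxx.
  by congr (_ * _); apply: eq_bigr => i _; rewrite nth_fps_inv_seq // leq_subr.
rewrite mulrC coef_fpsM big_ord_recl invS mulrA mulrN mulfV // mulN1r.
by rewrite addNr.
Qed.

End PowerSeriesRing.

Section GeneralisedStirling.
Variable R : realFieldType.
Implicit Types a b g : R.

Fixpoint gstirling_rec a b g n k : R :=
  if n is n'.+1 then
    (if k is k'.+1 then gstirling_rec a b g n' k' else 0)
    + (k%:R * b + g - n'%:R * a) * gstirling_rec a b g n' k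
  else (k == 0%N)%:R.

Lemma gstirling_rec_gt a b g n k : (n < k)%N -> gstirling_rec a b g n k = 0.
Proof.
elim: n k => [|n IH] [|k] //= lt_nk.
by rewrite !IH ?mulr0 ?addr0 // ltnW.
Qed.

Lemma gfactS g b k : gfact g b k.+1 = gfact g b k * ('X - (g + k%:R * b)%:P).
Proof. by rewrite /gfact big_ord_recr. Qed.

Lemma size_gfact g b k : size (gfact g b k) = k.+1.
Proof. by rewrite size_prod_XsubC /index_enum unlock -enumT size_enum_ord. Qed.

Lemma coef_gfact g b k i : (k <= i)%N -> (gfact g b k)`_i = (i == k)%:R.
Proof.
rewrite leq_eqVlt => /orP[/eqP <-|lt_ki]; last by rewrite nth_default ?size_gfact // gtn_eqF.
have /monicP : gfact g b k \is monic by exact: monic_prod_XsubC.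
by rewrite lead_coefE size_gfact eqxx.
Qed.

Lemma gstirling_rec_spec a b g : gstirling_spec a b g (gstirling_rec a b g).
Proof.
elim=> [|n IH]; first by rewrite big_ord1 /gfact !big_ord0 scale1r.
have gfact_shift k : gfact g b k * ('X - (0 + n%:R * a)%:P)
    = gfact g b k.+1 + (k%:R * b + g - n%:R * a) *: gfact g b k.
  rewrite gfactS -mul_polyC [_%:P * _]mulrC -mulrDr add0r !polyCB !polyCD.
  by congr (_ * _); ring.
rewrite gfactS IH big_distrl /=.
under eq_bigr do rewrite -scalerAl gfact_shift scalerDr scalerA mulrC.
rewrite big_split /= [RHS](eq_bigr _ (fun k _ => scalerDl _ _ _)) big_split /=.
congr (_ + _); first by rewrite [RHS]big_ord_recl /= scale0r add0r.
by rewrite [RHS]big_ord_recr /= gstirling_rec_gt // mulr0 scale0r addr0.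
Qed.

Lemma gfact_free g b m (c : nat -> R) :
  \sum_(k < m) c k *: gfact g b k = 0 -> forall k, (k < m)%N -> c k = 0.
Proof.
elim: m => [|m IH] // sum0 k lt_km.
have cm0 : c m = 0.
  have /(congr1 (fun p : {poly R} => p`_m)) := sum0.
  rewrite big_ord_recr /= coefD coefZ coef_gfact // eqxx mulr1 coef0 coef_sum.
  rewrite big1 ?add0r // => j _.
  by rewrite coefZ coef_gfact ?gtn_eqF ?mulr0 // ltnW.
move: lt_km; rewrite ltnS leq_eqVlt => /orP[/eqP -> //|]; apply: IH.
by move: sum0; rewrite big_ord_recr /= cm0 scale0r addr0.
Qed.

Lemma gstirlingE a b g n k :
  (k <= n)%N -> gstirling a b g n k = gstirling_rec a b g n k.
Proof.
move=> le_kn; apply: subr0_eq; move: k le_kn.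
have spec : gstirling_spec a b g (gstirling a b g).
  by apply: epsilon_spec; exists (gstirling_rec a b g); exact: gstirling_rec_spec.
apply: (@gfact_free g b n.+1 (fun k => gstirling a b g n k - gstirling_rec a b g n k)).
under eq_bigr do rewrite scalerBl.
by rewrite sumrB -spec -gstirling_rec_spec subrr.
Qed.

Lemma gstirling_recN a b g n k :
  gstirling_rec (- a) (- b) (- g) n k = (-1) ^+ (n + k) * gstirling_rec a b g n k.
Proof.
elim: n k => [|n IH] [|k] /=; rewrite ?mulr0 ?mulr1 // !IH.
  by rewrite !addn0 exprS; ring.
by rewrite addSn addnS !exprS; ring.
Qed.

Lemma gstirlingN a b g n k : (k <= n)%N ->
  gstirling (- a) (- b) (- g) n k = (-1) ^+ (n + k) * gstirling a b g n k.
Proof. by move=> le_kn; rewrite !gstirlingE // gstirling_recN. Qed.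

End GeneralisedStirling.

Section BinomialSeries.
Variable R : realFieldType.
Variable alpha : R.
Hypothesis alpha_neq0 : alpha != 0.

Lemma gbinom0 (c : R) : gbinom c 0 = 1.
Proof. by rewrite /gbinom big_ord0 divr1. Qed.

Lemma gbinomS (c : R) n : n.+1%:R * gbinom c n.+1 = (c - n%:R) * gbinom c n.
Proof.
rewrite /gbinom big_ord_recr /= factS natrM.
have fact_neq0 : n`!%:R != 0 :> R by rewrite pnatr_eq0 -lt0n fact_gt0.
by field; rewrite fact_neq0 addrC natr1 pnatr_eq0.
Qed.

Local Notation binser c := (fps_binpow alpha (c / alpha)).

Lemma binser0 c : binser c 0%N = 1.
Proof. by rewrite /fps_binpow gbinom0 mulr1. Qed.

Definition twisted_deriv (f : fps R) : fps R :=
  (1 + fps_const alpha * fps_X R) * fps_deriv f.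

Lemma coef_twisted_deriv f n :
  twisted_deriv f n = n.+1%:R * f n.+1 + alpha * (n%:R * f n).
Proof.
by rewrite /twisted_deriv mulrDl mul1r coef_fpsD -mulrA coef_fps_constM coef_fps_X_deriv.
Qed.

Lemma twisted_derivM f g :
  twisted_deriv (f * g) = twisted_deriv f * g + f * twisted_deriv g.
Proof. by rewrite /twisted_deriv fps_derivM; ring. Qed.

Lemma twisted_derivX f k : twisted_deriv (f ^+ k) = k%:R * f ^+ k.-1 * twisted_deriv f.
Proof. by rewrite /twisted_deriv fps_derivX; ring. Qed.

Lemma twisted_deriv_binser c : twisted_deriv (binser c) = fps_const c * binser c.
Proof.
apply: fpsP => n; rewrite coef_twisted_deriv coef_fps_constM /fps_binpow.
by rewrite mulrA gbinomS exprS; field.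
Qed.

Variables beta gamma : R.

Definition stirling_series k : fps R := (binser beta - 1) ^+ k * binser gamma.

Lemma twisted_deriv_stirling_series k :
  twisted_deriv (stirling_series k)
  = fps_const (k%:R * beta + gamma) * stirling_series k
    + fps_const (k%:R * beta) * stirling_series k.-1.
Proof.
rewrite /stirling_series twisted_derivM twisted_derivX.
rewrite /twisted_deriv fps_derivB fps_deriv1 subr0.
rewrite -/(twisted_deriv (binser beta)) -/(twisted_deriv (binser gamma)) !twisted_deriv_binser.
rewrite !rmorphD !rmorphM /= rmorph_nat.
case: k => [|k]; first by rewrite !mul0r; ring.
by rewrite /= exprS; ring.
Qed.

Lemma coef_stirling_series_rec n k :
  n.+1`!%:R * stirling_series k n.+1
  = (k%:R * beta + gamma - n%:R * alpha) * (n`!%:R * stirling_series k n)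
    + k%:R * beta * (n`!%:R * stirling_series k.-1 n).
Proof.
have := congr1 (fun f => f n) (twisted_deriv_stirling_series k).
rewrite /= coef_twisted_deriv coef_fpsD !coef_fps_constM => rec.
by rewrite factS natrM mulrAC (canRL (addrK _) rec); ring.
Qed.

Lemma coef_stirling_series n k :
  n`!%:R * stirling_series k n = beta ^+ k * k`!%:R * gstirling_rec alpha beta gamma n k.
Proof.
elim: n k => [|n IH] k.
  rewrite /stirling_series coef_fpsM0 coef_fpsX0 coef_fpsB binser0 coef_fps1 subrr binser0.
  by case: k => [|k] /=; rewrite ?expr0n /=; ring.
rewrite coef_stirling_series_rec !IH.
case: k => [|k] /=; first by ring.
by rewrite factS natrM exprS; ring.
Qed.

End BinomialSeries.

Section NegativeBinomialSeries.
Variable R : realFieldType.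
Implicit Types (f g w H : fps R) (l m : nat).

Lemma mbinom0 l : mbinom R l 0 = 1.
Proof. by rewrite /mbinom big_ord0 divr1. Qed.

Lemma mbinom0S k : mbinom R 0 k.+1 = 0.
Proof. by rewrite /mbinom big_ord_recl /= add0n !mul0r. Qed.

Lemma mbinomS l k : mbinom R l.+1 k.+1 = mbinom R l k.+1 + mbinom R l.+1 k.
Proof.
rewrite /mbinom big_ord_recr [X in _ = X / _ + _]big_ord_recl /= factS natrM.
under [X in _ = _ * X / _ + _]eq_bigr do rewrite /bump /= add1n addnS -addSn.
have fact_neq0 : k`!%:R != 0 :> R by rewrite pnatr_eq0 -lt0n fact_gt0.
by rewrite !natrD; field; rewrite fact_neq0 addrC natr1 pnatr_eq0.
Qed.

Lemma coef_fps_sum (I : Type) (r : seq I) (P : pred I) (F : I -> fps R) n :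
  (\sum_(i <- r | P i) F i) n = \sum_(i <- r | P i) F i n.
Proof. by elim/big_rec2: _ => // i f y _ <-. Qed.

Lemma coef_fpsXM_lt f g k i : f 0%N = 0 -> (i < k)%N -> (f ^+ k * g) i = 0.
Proof.
move=> f0; elim: k i => [|k IH] i // lt_ik.
rewrite exprS -mulrA coef_fpsM big_ord_recl f0 mul0r add0r big1 // => j _.
by rewrite IH ?mulr0 //= subnS; move: lt_ik (ltn_ord j); rewrite /bump /=; lia.
Qed.

Definition negbin_trunc w l m : fps R :=
  \sum_(k < m.+1) fps_const (mbinom R l k) * w ^+ k.

Lemma negbin_trunc0 w m : negbin_trunc w 0 m = 1.
Proof.
rewrite /negbin_trunc big_ord_recl big1 => [|i _]; last by rewrite mbinom0S rmorph0 mul0r.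
by rewrite mbinom0 rmorph1 mulr1 addr0.
Qed.

Lemma negbin_truncS w l m :
  negbin_trunc w l.+1 m * (1 - w)
  = negbin_trunc w l m - fps_const (mbinom R l.+1 m) * w ^+ m.+1.
Proof.
elim: m => [|m IH].
  by rewrite /negbin_trunc !big_ord1 !mbinom0 rmorph1 expr1; ring.
rewrite /negbin_trunc big_ord_recr /= mulrDl -/(negbin_trunc _ _ _) IH.
rewrite [in RHS]big_ord_recr /= -/(negbin_trunc _ _ _) mbinomS rmorphD /=.
by rewrite !exprS; ring.
Qed.

Lemma negbin_trunc_mul_pow w l m :
  exists Q, negbin_trunc w l m * (1 - w) ^+ l = 1 - w ^+ m.+1 * Q.
Proof.
elim: l => [|l [Q IH]]; first by exists 0; rewrite negbin_trunc0 expr0 mulr1 mulr0 subr0.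
exists (Q + fps_const (mbinom R l.+1 m) * (1 - w) ^+ l).
by rewrite exprS mulrA negbin_truncS mulrBl IH; ring.
Qed.

Lemma negbin_expansion H w l m :
  H * (1 - w) = 1 -> exists G, H ^+ l = negbin_trunc w l m + w ^+ m.+1 * G.
Proof.
move=> HwK; have [Q TQ] := negbin_trunc_mul_pow w l m.
exists (H ^+ l * Q).
have -> : negbin_trunc w l m = negbin_trunc w l m * (H * (1 - w)) ^+ l.
  by rewrite HwK expr1n mulr1.
by rewrite exprMn mulrCA TQ; ring.
Qed.

End NegativeBinomialSeries.

Lemma genEuler_gstirling (R : realFieldType) (alpha beta gamma : R) (lambda n : nat) :
  alpha != 0 ->
  genEuler lambda n alpha beta gamma
  = \sum_(k < n.+1) mbinom R lambda k * beta ^+ k * k`!%:R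
                    * gstirling alpha beta gamma n k * (- (1 / 2)) ^+ k.
Proof.
move=> alpha_neq0; rewrite /genEuler fps_powE.
set Bb := fps_binpow alpha (beta / alpha); set Bg := fps_binpow alpha (gamma / alpha).
set w := fps_const (- (1 / 2)) * (Bb - 1).
set H := fps_const 2 * fps_inv (Bb + 1).
have two_neq0 : 2 != 0 :> R by rewrite pnatr_eq0.
have w0 : w 0%N = 0 by rewrite /w /Bb coef_fps_constM coef_fpsB binser0 subrr mulr0.
have HwK : H * (1 - w) = 1.
  have -> : 1 - w = fps_const (1 / 2) * (Bb + 1).
    by apply: fpsP => i; rewrite /w coef_fpsB !coef_fps_constM coef_fpsB coef_fpsD; field.
  rewrite mulrACA -rmorphM fps_mulVf; last by rewrite coef_fpsD /Bb binser0 coef_fps1.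
  by rewrite mulr1 div1r mulfV // rmorph1.
transitivity (n`!%:R * (H ^+ lambda * Bg) n); first by [].
have [G ->] := negbin_expansion lambda n HwK.
rewrite mulrDl coef_fpsD -mulrA coef_fpsXM_lt // addr0.
rewrite /negbin_trunc mulr_suml coef_fps_sum mulr_sumr; apply: eq_bigr => k _.
have -> : fps_const (mbinom R lambda k) * w ^+ k * Bg
          = fps_const (mbinom R lambda k * (- (1 / 2)) ^+ k) * stirling_series alpha beta gamma k.
  by rewrite /w /Bb /Bg exprMn [in RHS]rmorphM rmorphXn /stirling_series; ring.
rewrite coef_fps_constM mulrCA coef_stirling_series //.
by rewrite (gstirlingE _ _ _ (ltnSE (ltn_ord k))); ring.
Qed.

Unset Implicit Arguments.

Theorem mainTheorem10 (R : realFieldType) (alpha beta gamma : R) (lambda : nat)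
  (halpha : alpha != 0) (n : nat) :
  genEuler lambda n alpha beta gamma
    = (-1) ^+ n * Apoly lambda (- (1 / 2)) n alpha (- beta) (- gamma)
  /\ genEuler lambda n alpha beta gamma
    = Apoly lambda (- (1 / 2)) n (- alpha) beta gamma.
Proof.
rewrite genEuler_gstirling // /Apoly; split.
  rewrite !opprK mulr_sumr; apply: eq_bigr => k _ /=.
  rewrite exprD (exprNn beta) -[(-1) ^+ n]signr_odd -[(-1) ^+ k]signr_odd.
  by case: (odd n); case: (odd k); rewrite /= ?expr0 ?expr1; ring.
apply: eq_bigr => k _; rewrite (gstirlingN _ _ _ (ltnSE (ltn_ord k))).
rewrite -[(-1) ^+ (n + k)]signr_odd.
by case: (odd _); rewrite /= ?expr0 ?expr1; ring.
Qed.
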